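(* Let $\gamma\in\,]0,+\infty[$ and let $h\colon\mathbb{R}\to\mathbb{R}\colon v\mapsto\log(1+\exp(-v))$. Then, as $v\to-\infty$, $$\mathrm{prox}_{\gamma h}(v)=v+\gamma\big(1-\exp(\gamma+v)+(1+\gamma)\exp(2(\gamma+v))\big)+o(\exp(2v)),$$ where $o(\exp(2v))$ denotes a function $F$ with $F(v)/\exp(2v)\to0$ as $v\to-\infty$.
   Context: For a convex function $\psi\colon\mathbb{R}\to\mathbb{R}$, $\mathrm{prox}_\psi(v)$ is the unique minimizer over $p\in\mathbb{R}$ of $\frac12(p-v)^2+\psi(p)$. *)

From Stdlib Require Import Reals Lra ClassicalEpsilon.
Open Scope R_scope.

Definition is_prox_point (psi : R -> R) (v p : R) : Prop :=
  forall q : R, 1/2 * (p - v)^2 + psi p <= 1/2 * (q - v)^2 + psi q.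

(* prox_psi(v): the (unique, for convex psi) minimizer, selected by Hilbert's epsilon. *)
Definition prox (psi : R -> R) (v : R) : R :=
  epsilon (inhabits 0) (is_prox_point psi v).

Definition h (v : R) : R := ln (1 + exp (- v)).

From Stdlib Require Import Reals Lra ClassicalEpsilon.
From Coquelicot Require Import Coquelicot.
Open Scope R_scope.

(* The objective of prox_{gamma h} has the strictly increasing derivative
   q - v - gamma / (1 + exp q), so prox_{gamma h}(v) is its unique zero p.
   Writing p = v + gamma - e and y = exp (gamma + v), this fixed-point equation
   becomes e (1 + y exp(-e)) = gamma y exp(-e), whence 0 <= e <= gamma y.
   Expanding with 1 - e <= exp(-e) <= 1 / (1 + e), the remainder of the
   second-order expansion is a sum of five nonnegative terms, each O(y^3);
   divided by exp(2v) it is O(exp v). *)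

Definition prox_objective (psi : R -> R) (v q : R) : R := 1/2 * (q - v)^2 + psi q.

Lemma prox_eq_strict_minimizer (psi : R -> R) (v p : R) :
  (forall q, q <> p -> prox_objective psi v p < prox_objective psi v q) ->
  prox psi v = p.
Proof.
  intros Hmin.
  assert (Hp : is_prox_point psi v p).
  { intro q; destruct (Req_dec q p) as [-> | Hq]; [lra | left; exact (Hmin q Hq)]. }
  assert (Hprox : is_prox_point psi v (prox psi v))
    by exact (epsilon_spec (inhabits 0) _ (ex_intro _ p Hp)).
  destruct (Req_dec (prox psi v) p) as [E | E]; [exact E |].
  specialize (Hmin _ E); specialize (Hprox p); unfold prox_objective in Hmin; lra.
Qed.

Lemma strict_minimizer_of_increasing_derivative (f f' : R -> R) (p : R) :
  (forall x, derivable_pt_lim f x (f' x)) ->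
  (forall x y, x < y -> f' x < f' y) ->
  f' p = 0 ->
  forall q, q <> p -> f p < f q.
Proof.
  intros Hf Hinc Hp q Hq.
  destruct (Rlt_or_le p q) as [Hpq | Hqp].
  - destruct (MVT_cor2 f f' p q Hpq (fun c _ => Hf c)) as [c [Hc [Hpc _]]].
    pose proof (Hinc p c Hpc).
    assert (0 < f' c * (q - p)) by (apply Rmult_lt_0_compat; lra); lra.
  - assert (Hqp' : q < p) by lra.
    destruct (MVT_cor2 f f' q p Hqp' (fun c _ => Hf c)) as [c [Hc [_ Hcp]]].
    pose proof (Hinc c p Hcp).
    assert (0 < - f' c * (p - q)) by (apply Rmult_lt_0_compat; lra); lra.
Qed.

Definition prox_h_residual (g v q : R) : R := q - v - g / (1 + exp q).

Lemma derivable_pt_lim_prox_objective_h (g v q : R) :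
  derivable_pt_lim (prox_objective (fun x => g * h x) v) q (prox_h_residual g v q).
Proof.
  apply is_derive_Reals; unfold prox_objective, prox_h_residual, h.
  pose proof (exp_pos (- q)); pose proof (exp_pos q).
  auto_derive; [lra |].
  rewrite exp_Ropp; field; lra.
Qed.

Lemma prox_h_residual_increasing (g v : R) :
  0 < g -> forall x y, x < y -> prox_h_residual g v x < prox_h_residual g v y.
Proof.
  intros Hg x y Hxy; unfold prox_h_residual.
  pose proof (exp_pos x); pose proof (exp_increasing x y Hxy).
  assert (g / (1 + exp y) <= g / (1 + exp x)).
  { apply Rmult_le_compat_l; [lra |]; apply Rinv_le_contravar; lra. }
  lra.
Qed.

Lemma prox_h_residual_root (g v : R) : 0 < g -> exists p, prox_h_residual g v p = 0.
Proof.
  intros Hg.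
  assert (Hcont : continuity (prox_h_residual g v)).
  { intro x; apply derivable_continuous_pt; exists (1 + g * exp x / (1 + exp x)^2).
    apply is_derive_Reals; unfold prox_h_residual.
    pose proof (exp_pos x); auto_derive; [lra | field; lra]. }
  pose proof (exp_pos v); pose proof (exp_pos (v + g)).
  assert (Hlo : prox_h_residual g v v < 0).
  { unfold prox_h_residual; assert (0 < g / (1 + exp v)) by (apply Rdiv_lt_0_compat; lra); lra. }
  assert (Hhi : 0 < prox_h_residual g v (v + g)).
  { unfold prox_h_residual.
    assert (g / (1 + exp (v + g)) < g).
    { apply Rmult_lt_reg_r with (1 + exp (v + g)); [lra |].
      unfold Rdiv; rewrite Rmult_assoc, Rinv_l by lra; nra. }
    lra. }
  destruct (IVT _ v (v + g) Hcont ltac:(lra) Hlo Hhi) as [p [_ Hp]].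
  now exists p.
Qed.

Lemma prox_scaled_h_fixed_point (g v : R) : 0 < g ->
  prox (fun x => g * h x) v - v = g / (1 + exp (prox (fun x => g * h x) v)).
Proof.
  intros Hg.
  destruct (prox_h_residual_root g v Hg) as [p Hp].
  rewrite (prox_eq_strict_minimizer _ v p).
  - unfold prox_h_residual in Hp; lra.
  - apply (strict_minimizer_of_increasing_derivative _ (prox_h_residual g v)); auto.
    + apply derivable_pt_lim_prox_objective_h.
    + now apply prox_h_residual_increasing.
Qed.

Lemma exp_neg_sandwich (e : R) : 1 - e <= exp (- e) /\ exp (- e) * (1 + e) <= 1.
Proof.
  pose proof (exp_ineq1_le (- e)); pose proof (exp_ineq1_le e); pose proof (exp_pos e).
  split; [lra |].
  rewrite exp_Ropp; apply Rmult_le_reg_l with (exp e); [lra |].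
  rewrite <- Rmult_assoc, Rinv_r by lra; lra.
Qed.

(* [g - e] plays the role of [prox v - v] and [y exp(-e)] that of [exp (prox v)]:
   the hypothesis is the fixed-point equation [g - e = g / (1 + y exp(-e))]. *)
Lemma fixed_point_expansion (g y e : R) :
  0 < g -> 0 < y -> 0 <= e ->
  e * (1 + y * exp (- e)) = g * y * exp (- e) ->
  Rabs (g - e - g * (1 - y + (1 + g) * y ^ 2)) <= (2 * g^3 + 3 * g^2 + g) * y^3.
Proof.
  intros Hg Hy He Hfix.
  set (E := exp (- e)) in *.
  assert (HE : 0 < E) by apply exp_pos.
  destruct (exp_neg_sandwich e) as [HE_lo HE_hi]; fold E in HE_lo, HE_hi.
  set (u := y * E).
  assert (Hfix_u : e * (1 + u) = g * u) by (unfold u; rewrite Hfix; ring).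
  set (delta := e - (1 - E)).
  assert (Hu : 0 < u <= y) by (unfold u; split; nra).
  assert (He_u : e <= g * u).
  { assert (0 <= e * u) by (apply Rmult_le_pos; lra). nra. }
  assert (He_y : e <= g * y) by nra.
  assert (Hdelta : 0 <= delta <= (g * y)^2).
  { pose proof (pow_incr e (g * y) 2 (conj He He_y)). unfold delta; split; nra. }
  assert (Hyu : 0 <= y - u <= g * y^2).
  { assert (y - u <= y * e) by (unfold u; nra). split; [lra | nra]. }
  assert (Hsplit : - (g - e - g * (1 - y + (1 + g) * y ^ 2)) =
     g * (y - u) * (y + u) + g^2 * y * (y - u) + g * y * e * u + g * y * delta + e * u^2).
  { transitivity (g * (y - u) * (y + u) + g^2 * y * (y - u) + g * y * e * u
                  + g * y * delta + e * u^2 + (1 - u - g * y) * (e * (1 + u) - g * u)).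
    - unfold delta, u; ring.
    - rewrite Hfix_u; ring. }
  assert (Hsq : 0 <= g * (y - u) * (y + u) <= 2 * g^2 * y^3).
  { assert ((y - u) * (y + u) <= g * y^2 * (2 * y)) by (apply Rmult_le_compat; lra).
    split; [apply Rmult_le_pos; [apply Rmult_le_pos |] |]; nra. }
  assert (Hgap : 0 <= g^2 * y * (y - u) <= g^3 * y^3).
  { assert (0 <= g^2 * y) by (apply Rmult_le_pos; [apply pow_le |]; lra).
    split; [apply Rmult_le_pos |]; nra. }
  assert (Hcross : 0 <= g * y * e * u <= g^2 * y^3).
  { assert (e * u <= g * y * y) by (apply Rmult_le_compat; lra).
    split; [repeat apply Rmult_le_pos |]; nra. }
  assert (Hdelta_y : 0 <= g * y * delta <= g^3 * y^3).
  { split; [repeat apply Rmult_le_pos |]; nra. }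
  assert (Hcube : 0 <= e * u^2 <= g * y^3).
  { assert (u^2 <= y^2) by (apply pow_incr; lra).
    assert (0 <= u^2) by (apply pow_le; lra).
    split; [apply Rmult_le_pos |]; nra. }
  rewrite <- Rabs_Ropp, Hsplit, Rabs_right; lra.
Qed.

Lemma prox_scaled_h_remainder (g v : R) : 0 < g ->
  Rabs (prox (fun x => g * h x) v
        - (v + g * (1 - exp (g + v) + (1 + g) * exp (2 * (g + v)))))
  <= (2 * g^3 + 3 * g^2 + g) * exp (g + v) ^ 3.
Proof.
  intros Hg.
  pose proof (prox_scaled_h_fixed_point g v Hg) as Hfix.
  set (p := prox (fun x => g * h x) v) in *.
  set (e := g - (p - v)).
  assert (Hp : exp p = exp (g + v) * exp (- e)) by (rewrite <- exp_plus; f_equal; unfold e; ring).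
  assert (He : 0 <= e).
  { pose proof (exp_pos p).
    assert (g / (1 + exp p) <= g).
    { apply Rmult_le_reg_r with (1 + exp p); [lra |].
      unfold Rdiv; rewrite Rmult_assoc, Rinv_l by lra; nra. }
    unfold e; lra. }
  assert (Hexp2 : exp (2 * (g + v)) = exp (g + v) ^ 2)
    by (replace (2 * (g + v)) with ((g + v) + (g + v)) by ring; rewrite exp_plus; ring).
  replace (p - (v + g * (1 - exp (g + v) + (1 + g) * exp (2 * (g + v)))))
    with (g - e - g * (1 - exp (g + v) + (1 + g) * exp (g + v) ^ 2))
    by (rewrite Hexp2; unfold e; ring).
  apply fixed_point_expansion; [exact Hg | apply exp_pos | exact He |].
  rewrite Rmult_assoc, <- Hp.
  pose proof (exp_pos p).
  replace e with (g - g / (1 + exp p)) by (unfold e; lra).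
  field; lra.
Qed.

Theorem proposition3 (gamma : R) (hgamma : 0 < gamma) :
  forall eps : R, 0 < eps ->
  exists M : R, forall v : R, v < M ->
    Rabs ((prox (fun x => gamma * h x) v
           - (v + gamma * (1 - exp (gamma + v)
                           + (1 + gamma) * exp (2 * (gamma + v)))))
          / exp (2 * v)) < eps.
Proof.
  intros eps Heps.
  set (c := (2 * gamma^3 + 3 * gamma^2 + gamma) * exp (3 * gamma)).
  assert (Hc : 0 < c).
  { pose proof (pow_lt gamma 2 hgamma); pose proof (pow_lt gamma 3 hgamma).
    apply Rmult_lt_0_compat; [lra | apply exp_pos]. }
  exists (ln (eps / c)); intros v Hv.
  assert (Hsmall : exp v < eps / c).
  { rewrite <- (exp_ln (eps / c)) by (apply Rdiv_lt_0_compat; lra).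
    now apply exp_increasing. }
  assert (Hcube : exp (gamma + v) ^ 3 = exp (3 * gamma) * exp v * exp (2 * v)).
  { rewrite <- !exp_plus; simpl; rewrite Rmult_1_r, <- !exp_plus; f_equal; ring. }
  pose proof (prox_scaled_h_remainder gamma v hgamma) as Hrem.
  rewrite Hcube, <- !Rmult_assoc in Hrem; fold c in Hrem.
  pose proof (exp_pos (2 * v)).
  rewrite Rabs_div, (Rabs_right (exp (2 * v))) by lra.
  apply Rmult_lt_reg_r with (exp (2 * v)); [lra |].
  unfold Rdiv; rewrite Rmult_assoc, Rinv_l, Rmult_1_r by lra.
  apply (Rle_lt_trans _ _ _ Hrem), Rmult_lt_compat_r; [lra |].
  replace eps with (c * (eps / c)) by (field; lra).
  now apply Rmult_lt_compat_l.
Qed.
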